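(* Let $e$ be a closed term with $\vdash e:\perp\to X$, where $X$ is a propositional variable. Then for each term $u$ and each finite sequence of terms $\bar v$, $(e\;u)\;\bar v\triangleright^*\underline{\mu}.u$, i.e. $(e\;u)\;\bar v$ reduces to some element of $M_u$.
   Context: $\lambda\mu$-terms: $t::= x\mid \lambda x.t\mid (t\;t)\mid \mu a.t\mid (a\;t)$ over disjoint infinite sets of $\lambda$-variables and $\mu$-variables; types built from propositional variables and $\perp$ with $\to$. Reduction $(\lambda x.u\;v)\triangleright u[x:=v]$, $(\mu a.u\;v)\triangleright\mu a.u[a:=^*v]$ ($u[a:=^*v]$ replaces each subterm $(a\;w)$ of $u$ by $(a\;(w\;v))$), $\triangleright^*$ its reflexive transitive compatible closure. Typing rules: (ax) $\Gamma\vdash x:A;\Delta$ if $x:A\in\Gamma$; ($\to_i$) from $\Gamma,x:A\vdash t:B;\Delta$ infer $\Gamma\vdash\lambda x.t:A\to B;\Delta$; ($\to_e$) from $\Gamma\vdash u:A\to B;\Delta$, $\Gamma\vdash v:A;\Delta$ infer $\Gamma\vdash(u\;v):B;\Delta$; ($\mu$) from $\Gamma\vdash t:\perp;\Delta,a:A$ infer $\Gamma\vdash\mu a.t:A;\Delta$; ($\perp$) from $\Gamma\vdash t:A;\Delta,a:A$ infer $\Gamma\vdash(a\;t):\perp;\Delta,a:A$; $\vdash$ means empty contexts. For a sequence $\bar v=v_1\dots v_n$, $t\;\bar v=((t\;v_1)\dots v_n)$. For a term $t$, $M_t$ is the smallest set containing $t$ such that $w\in M_t$ and $a$ a $\mu$-variable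 imply $\mu a.w\in M_t$ and $(a\;w)\in M_t$; $\underline{\mu}.t$ denotes an arbitrary element of $M_t$. *)

(* Lambda-mu calculus in de Bruijn representation.
   lambda-variables and mu-variables are two separate index spaces. *)
From Stdlib Require Import List Arith Relations.
Import ListNotations.

Inductive term : Type :=
| Var : nat -> term
| Lam : term -> term               (* \x.t, binds lambda-index 0 *)
| App : term -> term -> term
| Mu : term -> term                (* mu a.t, binds mu-index 0 *)
| NApp : nat -> term -> term.      (* (a t), a a mu-variable *)

Inductive type : Type :=
| TVar : nat -> type
| TBot : type
| TArr : type -> type -> type.

Definition upren (xi : nat -> nat) : nat -> nat :=
  fun n => match n with 0 => 0 | S m => S (xi m) end.

Fixpoint renL (xi : nat -> nat) (t : term) : term :=
  match t with
  | Var n => Var (xi n)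
  | Lam t => Lam (renL (upren xi) t)
  | App t1 t2 => App (renL xi t1) (renL xi t2)
  | Mu t => Mu (renL xi t)
  | NApp a t => NApp a (renL xi t)
  end.

Fixpoint renM (xi : nat -> nat) (t : term) : term :=
  match t with
  | Var n => Var n
  | Lam t => Lam (renM xi t)
  | App t1 t2 => App (renM xi t1) (renM xi t2)
  | Mu t => Mu (renM (upren xi) t)
  | NApp a t => NApp (xi a) (renM xi t)
  end.

Fixpoint substL (sigma : nat -> term) (t : term) : term :=
  match t with
  | Var n => sigma n
  | Lam t => Lam (substL (fun n => match n with
                                   | 0 => Var 0
                                   | S m => renL S (sigma m) end) t)
  | App t1 t2 => App (substL sigma t1) (substL sigma t2)
  | Mu t => Mu (substL (fun n => renM S (sigma n)) t)
  | NApp a t => NApp a (substL sigma t)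
  end.

(* u[x := v] for the lambda-variable bound by an outer Lam *)
Definition subst0 (v : term) (u : term) : term :=
  substL (fun n => match n with 0 => v | S m => Var m end) u.

(* structural substitution u[a :=* v]: every subterm (a w) becomes (a (w v)) *)
Fixpoint ssubst (a : nat) (v : term) (t : term) : term :=
  match t with
  | Var n => Var n
  | Lam t => Lam (ssubst a (renL S v) t)
  | App t1 t2 => App (ssubst a v t1) (ssubst a v t2)
  | Mu t => Mu (ssubst (S a) (renM S v) t)
  | NApp b t => if Nat.eqb b a then NApp b (App (ssubst a v t) v)
                else NApp b (ssubst a v t)
  end.

Inductive step : term -> term -> Prop :=
| step_beta : forall u v, step (App (Lam u) v) (subst0 v u)
| step_mu : forall u v, step (App (Mu u) v) (Mu (ssubst 0 (renM S v) u))
| step_lam : forall t t', step t t' -> step (Lam t) (Lam t')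
| step_appl : forall t t' s, step t t' -> step (App t s) (App t' s)
| step_appr : forall t s s', step s s' -> step (App t s) (App t s')
| step_mu_c : forall t t', step t t' -> step (Mu t) (Mu t')
| step_napp : forall a t t', step t t' -> step (NApp a t) (NApp a t').

Definition reds : term -> term -> Prop := clos_refl_trans term step.

(* typing judgement  Gamma |- t : A ; Delta  (contexts as de Bruijn lists) *)
Inductive typed : list type -> list type -> term -> type -> Prop :=
| ty_ax : forall G D n A, nth_error G n = Some A -> typed G D (Var n) A
| ty_lam : forall G D t A B, typed (A :: G) D t B -> typed G D (Lam t) (TArr A B)
| ty_app : forall G D u v A B,
    typed G D u (TArr A B) -> typed G D v A -> typed G D (App u v) B
| ty_mu : forall G D t A, typed G (A :: D) t TBot -> typed G D (Mu t) A
| ty_bot : forall G D a t A,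
    nth_error D a = Some A -> typed G D t A -> typed G D (NApp a t) TBot.

Definition apps (t : term) (vs : list term) : term := fold_left App vs t.

(* mu-binding of the (free, de Bruijn) mu-name a in w: the de Bruijn
   form of the named term  mu a. w  (if a is not free in w this is just
   mu applied to the shifted w). *)
Definition mu_bind (a : nat) (w : term) : term :=
  Mu (renM (fun k => if Nat.eqb k a then 0 else S k) w).

Inductive inM (t : term) : term -> Prop :=
| inM_base : inM t t
| inM_mu : forall a w, inM t w -> inM t (mu_bind a w)
| inM_napp : forall a w, inM t w -> inM t (NApp a w).

(* A realizability argument.  Interpret ⊥ by the empty stack, a propositional
   variable by all stacks, and A → B by the stacks w :: l with w realizing A
   and l a stack of B; a term realizes A when it reduces into M_u once applied
   to any stack of A.  Adequacy says that every typed term realizes its type,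
   whatever realizers are substituted for its λ-variables and whatever stacks
   of the right types are assigned to its μ-names: the μ-case works because
   (μa.t) applied to a stack pushes that stack onto every subterm (a w).
   Now u realizes ⊥, so u :: v̄ is a stack of ⊥ → X, and e applied to it
   reduces into M_u. *)

From Stdlib Require Import List Arith Lia Relations FunctionalExtensionality.
Import ListNotations.

(** * Renaming and substitution *)

Lemma upren_comp (f g : nat -> nat) :
  (fun n => upren f (upren g n)) = upren (fun n => f (g n)).
Proof. extensionality n; destruct n; reflexivity. Qed.

Lemma upren_id : upren (fun k => k) = fun k => k.
Proof. extensionality n; destruct n; reflexivity. Qed.

Lemma renL_renL t : forall f g, renL f (renL g t) = renL (fun n => f (g n)) t.
Proof. induction t; intros; simpl; f_equal; auto. rewrite IHt, upren_comp; auto. Qed.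

Lemma renM_renM t : forall f g, renM f (renM g t) = renM (fun n => f (g n)) t.
Proof. induction t; intros; simpl; f_equal; auto. rewrite IHt, upren_comp; auto. Qed.

Lemma renL_renM t : forall f g, renL f (renM g t) = renM g (renL f t).
Proof. induction t; intros; simpl; f_equal; auto. Qed.

Lemma renM_id t : renM (fun k => k) t = t.
Proof. induction t; simpl; f_equal; auto. rewrite upren_id; auto. Qed.

Definition up (s : nat -> term) : nat -> term :=
  fun n => match n with 0 => Var 0 | S m => renL S (s m) end.

Lemma renL_substL t : forall f s,
  renL f (substL s t) = substL (fun n => renL f (s n)) t.
Proof.
  induction t; intros; simpl; f_equal; auto.
  - rewrite IHt. f_equal. extensionality n; destruct n; simpl; auto.
    rewrite !renL_renL; auto.
  - rewrite IHt. f_equal. extensionality n. apply renL_renM.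
Qed.

Lemma substL_renL t : forall f s, substL s (renL f t) = substL (fun n => s (f n)) t.
Proof.
  induction t; intros; simpl; f_equal; auto.
  - rewrite IHt. f_equal. extensionality n; destruct n; auto.
  - rewrite IHt. auto.
Qed.

Lemma renM_substL t : forall g s,
  renM g (substL s t) = substL (fun n => renM g (s n)) (renM g t).
Proof.
  induction t; intros; simpl; f_equal; auto.
  - rewrite IHt. f_equal. extensionality n; destruct n; simpl; auto.
    rewrite renL_renM; auto.
  - rewrite IHt. f_equal. extensionality n. rewrite !renM_renM. auto.
Qed.

Lemma substL_var t : forall s, (forall n, s n = Var n) -> substL s t = t.
Proof.
  induction t; intros s Hs; simpl; f_equal; auto.
  - apply IHt. intros [|n]; simpl; auto. rewrite Hs; auto.
  - apply IHt. intros n. rewrite Hs; auto.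
Qed.

Lemma subst0_renL_S v t : subst0 v (renL S t) = t.
Proof. unfold subst0. rewrite substL_renL. apply substL_var. auto. Qed.

Lemma renM_apps l : forall h t, renM h (apps t l) = apps (renM h t) (map (renM h) l).
Proof. induction l; intros; simpl; auto. Qed.

Lemma substL_apps l : forall s t,
  substL s (apps t l) = apps (substL s t) (map (substL s) l).
Proof. induction l; intros; simpl; auto. Qed.

Lemma ssubst_apps l : forall a v t,
  ssubst a v (apps t l) = apps (ssubst a v t) (map (ssubst a v) l).
Proof. induction l; intros; simpl; auto. Qed.

Lemma apps_app l1 : forall l2 t, apps t (l1 ++ l2) = apps (apps t l1) l2.
Proof. unfold apps; intros; apply fold_left_app. Qed.

Lemma ssubst_renM_fresh t : forall g a v,
  (forall k, g k <> a) -> ssubst a v (renM g t) = renM g t.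
Proof.
  induction t; intros g a v Hg; simpl; try (f_equal; solve [auto]).
  - f_equal. apply IHt. intros [|k]; simpl; auto.
  - destruct (Nat.eqb_spec (g n) a). { exfalso; eapply Hg; eauto. } f_equal; auto.
Qed.

Lemma ssubst_S_fresh v t : ssubst 0 v (renM S t) = renM S t.
Proof. apply ssubst_renM_fresh. discriminate. Qed.

Lemma renM_ssubst t : forall g a v, (forall b, g b = g a -> b = a) ->
  renM g (ssubst a v t) = ssubst (g a) (renM g v) (renM g t).
Proof.
  induction t; intros g a v Hg; simpl; try (f_equal; solve [auto]).
  - f_equal. rewrite IHt, renL_renM; auto.
  - f_equal. rewrite IHt, !renM_renM; [reflexivity|].
    intros [|b]; simpl; try discriminate. intros E; injection E; intro; f_equal; auto.
  - destruct (Nat.eqb_spec n a); destruct (Nat.eqb_spec (g n) (g a)); subst; simpl.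
    + f_equal. f_equal; auto.
    + congruence.
    + exfalso; auto.
    + f_equal; auto.
Qed.

Lemma renL_ssubst t : forall f a v,
  renL f (ssubst a v t) = ssubst a (renL f v) (renL f t).
Proof.
  induction t; intros; simpl; try (f_equal; solve [auto]).
  - f_equal. rewrite IHt, !renL_renL. reflexivity.
  - f_equal. rewrite IHt, renL_renM; auto.
  - destruct (Nat.eqb n a); simpl; f_equal; auto. f_equal; auto.
Qed.

(** * Instantiation with stacks *)

Definition scons {X : Type} (x : X) (f : nat -> X) : nat -> X :=
  fun n => match n with 0 => x | S m => f m end.

Definition upstk (r : nat -> list term) : nat -> list term :=
  fun a => match a with 0 => nil | S b => map (renM S) (r b) end.

(* [inst s k r t] substitutes [s] for the λ-variables of [t], renames its free
   μ-names by [k], and appends the stack [r a] to the argument of every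
   [(a w)]: the syntactic side of interpreting a context [Γ; Δ]. *)
Fixpoint inst (s : nat -> term) (k : nat -> nat) (r : nat -> list term)
    (t : term) : term :=
  match t with
  | Var n => s n
  | Lam t => Lam (inst (up s) k (fun a => map (renL S) (r a)) t)
  | App t1 t2 => App (inst s k r t1) (inst s k r t2)
  | Mu t => Mu (inst (fun n => renM S (s n)) (upren k) (upstk r) t)
  | NApp a t => NApp (k a) (apps (inst s k r t) (r a))
  end.

Lemma renM_inst t : forall h s k r,
  renM h (inst s k r t) =
  inst (fun n => renM h (s n)) (fun a => h (k a)) (fun a => map (renM h) (r a)) t.
Proof.
  induction t; intros; simpl; auto.
  - f_equal. rewrite IHt. f_equal.
    + extensionality n; destruct n; simpl; auto. rewrite renL_renM; auto.
    + extensionality a. rewrite !map_map. apply map_ext. intros; symmetry; apply renL_renM.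
  - f_equal; auto.
  - f_equal. rewrite IHt. f_equal.
    + extensionality n. rewrite !renM_renM. auto.
    + extensionality n; destruct n; auto.
    + extensionality a; destruct a; simpl; auto. rewrite !map_map. apply map_ext.
      intros; rewrite !renM_renM; auto.
  - f_equal. rewrite renM_apps, IHt. auto.
Qed.

Lemma substL_inst t : forall q s k r,
  substL q (inst s k r t) =
  inst (fun n => substL q (s n)) k (fun a => map (substL q) (r a)) t.
Proof.
  induction t; intros; simpl; auto.
  - f_equal. rewrite IHt. f_equal.
    + extensionality n; destruct n; simpl; auto. rewrite substL_renL, renL_substL. auto.
    + extensionality a. rewrite !map_map. apply map_ext. intros.
      rewrite substL_renL, renL_substL. auto.
  - f_equal; auto.
  - f_equal. rewrite IHt. f_equal.
    + extensionality n. rewrite renM_substL. auto.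
    + extensionality a; destruct a; simpl; auto. rewrite !map_map. apply map_ext.
      intros; rewrite renM_substL; auto.
  - f_equal. rewrite substL_apps, IHt. auto.
Qed.

Lemma inst_id t : forall s k r,
  (forall n, s n = Var n) -> (forall a, k a = a) -> (forall a, r a = nil) ->
  inst s k r t = t.
Proof.
  induction t; intros s k r Hs Hk Hr; simpl; auto.
  - f_equal. apply IHt; auto.
    + intros [|n]; simpl; auto. rewrite Hs; auto.
    + intros; rewrite Hr; auto.
  - f_equal; auto.
  - f_equal. apply IHt.
    + intros; rewrite Hs; auto.
    + intros [|a]; simpl; auto.
    + intros [|a]; simpl; auto. rewrite Hr; auto.
  - rewrite Hk, Hr. simpl. f_equal; auto.
Qed.

Lemma subst0_inst_up w s k r t :
  subst0 w (inst (up s) k (fun a => map (renL S) (r a)) t) = inst (scons w s) k r t.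
Proof.
  unfold subst0. rewrite substL_inst. f_equal.
  - extensionality n. destruct n; simpl; auto. apply subst0_renL_S.
  - extensionality a. rewrite map_map, <- map_id. apply map_ext, subst0_renL_S.
Qed.

Definition push (r : nat -> list term) (a : nat) (l : list term) : nat -> list term :=
  fun b => if Nat.eqb b a then r a ++ l else r b.

Lemma push_nil r a : push r a [] = r.
Proof.
  extensionality b. unfold push. rewrite app_nil_r.
  destruct (Nat.eqb_spec b a); subst; auto.
Qed.

Lemma push_push r a l1 l2 : push (push r a l1) a l2 = push r a (l1 ++ l2).
Proof.
  extensionality b. unfold push. rewrite Nat.eqb_refl, app_assoc.
  destruct (Nat.eqb b a); auto.
Qed.

Lemma ssubst_inst t : forall s k r c a v,
  (forall b, k b = c <-> b = a) ->
  (forall n, ssubst c v (s n) = s n) ->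
  (forall b y, In y (r b) -> ssubst c v y = y) ->
  ssubst c v (inst s k r t) = inst s k (push r a [v]) t.
Proof.
  induction t; intros s k r c a v Hk Hs Hr; simpl; auto.
  - f_equal. rewrite (IHt _ _ _ c a (renL S v)); auto.
    + f_equal. extensionality b. unfold push. destruct (Nat.eqb b a); auto.
      rewrite map_app; auto.
    + intros [|n]; simpl; auto. rewrite <- renL_ssubst, Hs. auto.
    + intros b y Hy. apply in_map_iff in Hy. destruct Hy as [z [<- Hz]].
      rewrite <- renL_ssubst, (Hr b z); auto.
  - f_equal; eauto.
  - assert (HS : forall b, S b = S c -> b = c) by (intros b E; injection E; auto).
    f_equal. rewrite (IHt _ _ _ (S c) (S a) (renM S v)); auto.
    + f_equal. extensionality b. unfold push, upstk. destruct b; simpl; auto.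
      destruct (Nat.eqb b a); auto. rewrite map_app; auto.
    + intros [|b]; simpl; split; intro H; try discriminate.
      * injection H; intro H'. apply Hk in H'. subst; auto.
      * injection H; intro H'. f_equal. apply Hk; auto.
    + intros n. rewrite <- (renM_ssubst _ S c v), Hs; auto.
    + intros [|b] y Hy; simpl in Hy; [contradiction|].
      apply in_map_iff in Hy. destruct Hy as [z [<- Hz]].
      rewrite <- (renM_ssubst _ S c v), (Hr b z); auto.
  - rewrite ssubst_apps, IHt with (a := a); auto.
    rewrite map_ext_in with (g := fun y => y) by (intros; eapply Hr; eauto).
    rewrite map_id. unfold push.
    destruct (Nat.eqb_spec (k n) c) as [E|E]; destruct (Nat.eqb_spec n a) as [E'|E'].
    + subst. rewrite apps_app. reflexivity.
    + exfalso. apply E', Hk, E.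
    + exfalso. apply E, Hk, E'.
    + reflexivity.
Qed.

(** * Reduction *)

Lemma reds_cong (f : term -> term) : (forall a b, step a b -> step (f a) (f b)) ->
  forall a b, reds a b -> reds (f a) (f b).
Proof.
  intros Hf a b H. induction H.
  - apply rt_step; auto.
  - apply rt_refl.
  - eapply rt_trans; eauto.
Qed.

Lemma reds_apps l : forall t t', reds t t' -> reds (apps t l) (apps t' l).
Proof.
  induction l as [|v l IH]; intros; simpl; auto. apply IH.
  apply (reds_cong (fun z => App z v)); auto. intros; constructor; auto.
Qed.

Lemma reds_mu_apps_push l : forall s k r t,
  (forall n v, ssubst 0 v (s n) = s n) ->
  (forall a, k a = 0 <-> a = 0) ->
  (forall b y, In y (r b) -> forall v, ssubst 0 v y = y) ->
  reds (apps (Mu (inst s k r t)) l) (Mu (inst s k (push r 0 (map (renM S) l)) t)).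
Proof.
  induction l as [|v l IH]; intros s k r t Hs Hk Hr; simpl.
  - rewrite push_nil. apply rt_refl.
  - eapply rt_trans. { apply reds_apps, rt_step, step_mu. }
    rewrite ssubst_inst with (a := 0); eauto.
    change (renM S v :: map (renM S) l) with ([renM S v] ++ map (renM S) l).
    rewrite <- push_push.
    apply IH; auto.
    intros b y Hy v'. unfold push in Hy. destruct (Nat.eqb b 0); eauto.
    apply in_app_or in Hy. destruct Hy as [Hy|[<-|[]]]; eauto.
    apply ssubst_S_fresh.
Qed.

Lemma reds_inst_mu_apps s k r t l :
  reds (apps (inst s k r (Mu t)) l)
       (Mu (inst (fun n => renM S (s n)) (upren k) (push (upstk r) 0 (map (renM S) l)) t)).
Proof.
  apply reds_mu_apps_push.
  - intros. apply ssubst_S_fresh.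
  - intros [|a]; simpl; split; intro; auto; discriminate.
  - intros [|b] y Hy v; simpl in Hy; [contradiction|].
    apply in_map_iff in Hy. destruct Hy as [z [<- _]]. apply ssubst_S_fresh.
Qed.

(** * Realizability *)

Section Realizability.
Variable u : term.

(* [inM_under n w]: [w], put under [n] more μ-binders, lies in M_u. *)
Inductive inM_under : nat -> term -> Prop :=
| inM_under_base : forall n, inM_under n (renM (Nat.add n) u)
| inM_under_napp : forall n a w, inM_under n w -> inM_under n (NApp a w)
| inM_under_mu : forall n w, inM_under (S n) w -> inM_under n (Mu w).

Definition redM n t := exists w, reds t w /\ inM_under n w.

Lemma redM_reds n t t' : reds t t' -> redM n t' -> redM n t.
Proof. intros H [w [Hw Hin]]. exists w; split; auto. eapply rt_trans; eauto. Qed.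

Lemma redM_mu n t : redM (S n) t -> redM n (Mu t).
Proof.
  intros [w [Hw Hin]]. exists (Mu w); split; [|constructor; auto].
  apply (reds_cong Mu); auto. intros; constructor; auto.
Qed.

Lemma redM_napp n a t : redM n t -> redM n (NApp a t).
Proof.
  intros [w [Hw Hin]]. exists (NApp a w); split; [|constructor; auto].
  apply (reds_cong (NApp a)); auto. intros; constructor; auto.
Qed.

(* The μ-names that may be free in [u], those from [n] on, are shifted to [m]
   on; the names below [n] may be renamed arbitrarily. *)
Definition admissible n m (h : nat -> nat) := forall k, h (n + k) = m + k.

Lemma admissible_comp n m p h g :
  admissible n m h -> admissible m p g -> admissible n p (fun x => g (h x)).
Proof. unfold admissible; intros H G k. rewrite H, G; auto. Qed.

Lemma admissible_id n : admissible n n (fun x => x).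
Proof. intro; auto. Qed.

Lemma admissible_S n : admissible n (S n) S.
Proof. intro; auto. Qed.

Fixpoint stack (A : type) (m : nat) (l : list term) : Prop :=
  match A with
  | TVar _ => True
  | TBot => l = nil
  | TArr A B =>
      match l with
      | nil => False
      | w :: l' =>
          (forall m' h, admissible m m' h -> forall l0, stack A m' l0 ->
             redM m' (apps (renM h w) l0)) /\ stack B m l'
      end
  end.

Definition realizes A n t :=
  forall m h, admissible n m h -> forall l, stack A m l -> redM m (apps (renM h t) l).

Lemma realizes_renM A n m h t :
  realizes A n t -> admissible n m h -> realizes A m (renM h t).
Proof.
  intros R H m' h' H' l Hl. rewrite renM_renM. apply R; auto.
  eapply admissible_comp; eauto.
Qed.

Lemma stack_renM A : forall n m h l,
  stack A n l -> admissible n m h -> stack A m (map (renM h) l).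
Proof.
  induction A as [X| |A1 _ A2 IH]; intros n m h l Hl H; simpl in *; auto.
  - subst; auto.
  - destruct l as [|w l]; auto. destruct Hl as [Hw Hl]. split; eauto.
    apply (realizes_renM A1 n m h w); auto.
Qed.

Lemma realizes_bot n t : realizes TBot n t -> redM n t.
Proof.
  intros R. specialize (R n (fun x => x) (admissible_id n) nil eq_refl).
  simpl in R. rewrite renM_id in R; auto.
Qed.

Lemma realizes_bot_u : realizes TBot 0 u.
Proof.
  intros m h Hh l Hl. simpl in Hl. subst l. exists (renM h u). split; [apply rt_refl|].
  replace (renM h u) with (renM (Nat.add m) u)
    by (f_equal; extensionality j; symmetry; exact (Hh j)).
  constructor.
Qed.

Lemma redM_inst_lam m s k r t w l :
  redM m (apps (inst (scons w s) k r t) l) -> redM m (apps (inst s k r (Lam t)) (w :: l)).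
Proof.
  intros H.
  change (apps (inst s k r (Lam t)) (w :: l))
    with (apps (App (Lam (inst (up s) k (fun a => map (renL S) (r a)) t)) w) l).
  eapply redM_reds; [apply reds_apps, rt_step, step_beta|].
  rewrite subst0_inst_up. exact H.
Qed.

Lemma redM_inst_mu m s k r t l :
  realizes TBot (S m)
    (inst (fun x => renM S (s x)) (upren k) (push (upstk r) 0 (map (renM S) l)) t) ->
  redM m (apps (inst s k r (Mu t)) l).
Proof.
  intros R. eapply redM_reds; [apply reds_inst_mu_apps|].
  apply redM_mu, realizes_bot, R.
Qed.

Definition env (G D : list type) (n : nat) (s : nat -> term) (r : nat -> list term) : Prop :=
  (forall x B, nth_error G x = Some B -> realizes B n (s x)) /\
  (forall a B, nth_error D a = Some B -> stack B n (r a)).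

Lemma env_nil n s r : env nil nil n s r.
Proof. split; intros [|x] B H; discriminate. Qed.

Lemma env_renM G D n m h s r : admissible n m h -> env G D n s r ->
  env G D m (fun x => renM h (s x)) (fun a => map (renM h) (r a)).
Proof.
  intros Hh [Hs Hr]. split.
  - intros x B Hx. eapply realizes_renM; eauto.
  - intros a B Ha. eapply stack_renM; eauto.
Qed.

Lemma env_scons G D n A w s r : realizes A n w -> env G D n s r ->
  env (A :: G) D n (scons w s) r.
Proof.
  intros Hw [Hs Hr]. split; auto.
  intros [|x] B Hx; simpl in Hx; eauto. injection Hx as <-. exact Hw.
Qed.

Lemma env_mu G D n A s r l : stack A n l -> env G D n s r ->
  env G (A :: D) (S n) (fun x => renM S (s x)) (push (upstk r) 0 (map (renM S) l)).
Proof.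
  intros Hl E. destruct (env_renM _ _ _ _ _ _ _ (admissible_S n) E) as [Hs Hr]. split; auto.
  intros [|a] B Ha; simpl in Ha; unfold push; simpl.
  - injection Ha; intros <-. eapply stack_renM; eauto. apply admissible_S.
  - auto.
Qed.

Lemma adequacy G D t A : typed G D t A ->
  forall n s k r, env G D n s r -> realizes A n (inst s k r t).
Proof.
  induction 1 as [G D x A Hx|G D t A B _ IH|G D t v A B _ IHt _ IHv|G D t A _ IH
                 |G D a t A Ha _ IH];
    intros n s k r E; [apply (proj1 E); auto|..]; intros m h Hh l Hl.
  - destruct l as [|w l]; [contradiction|]. destruct Hl as [Hw Hl].
    rewrite renM_inst. apply redM_inst_lam.
    pose proof (env_scons _ _ _ _ _ _ _ Hw (env_renM _ _ _ _ _ _ _ Hh E)) as E'.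
    pose proof (IH m _ (fun a => h (k a)) _ E' m (fun x => x) (admissible_id m) l Hl) as R.
    rewrite renM_id in R. exact R.
  - apply (IHt n s k r E m h Hh (renM h (inst s k r v) :: l)).
    split; auto. apply (realizes_renM A n m h); auto.
  - rewrite renM_inst. apply redM_inst_mu, IH.
    apply env_mu; [exact Hl|]. eapply env_renM; eauto.
  - simpl in Hl. subst l. simpl. apply redM_napp. rewrite renM_apps.
    apply (IH n s k r E m h Hh). destruct E as [_ Hr]. eapply stack_renM; eauto.
Qed.

End Realizability.

(** * From [inM_under] to [inM] *)

Fixpoint mu_names_below (B : nat) (t : term) : Prop :=
  match t with
  | Var _ => True
  | Lam t => mu_names_below B t
  | App t1 t2 => mu_names_below B t1 /\ mu_names_below B t2
  | Mu t => mu_names_below (S B) t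
  | NApp a t => a < B /\ mu_names_below B t
  end.

Lemma mu_names_below_mono t : forall B B',
  mu_names_below B t -> B <= B' -> mu_names_below B' t.
Proof.
  induction t; simpl; intros B B' H HB; auto.
  - eauto.
  - destruct H; split; eauto.
  - eapply IHt; eauto; lia.
  - destruct H; split; [lia|eauto].
Qed.

Lemma mu_names_bounded t : exists B, mu_names_below B t.
Proof.
  induction t as [n|t [B H]|t1 [B1 H1] t2 [B2 H2]|t [B H]|a t [B H]]; simpl.
  - exists 0; auto.
  - exists B; auto.
  - exists (max B1 B2). split; eapply mu_names_below_mono; eauto; lia.
  - exists B. eapply mu_names_below_mono; eauto.
  - exists (max (S a) B). split; [lia|]. eapply mu_names_below_mono; eauto; lia.
Qed.

Lemma renM_ext_below t : forall B f g, mu_names_below B t ->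
  (forall k, k < B -> f k = g k) -> renM f t = renM g t.
Proof.
  induction t; simpl; intros B f g Hb Hfg; auto.
  - f_equal; eauto.
  - destruct Hb; f_equal; eauto.
  - f_equal. eapply IHt; eauto. intros [|k] Hk; simpl; auto. f_equal. apply Hfg. lia.
  - destruct Hb. f_equal; eauto.
Qed.

Lemma inM_under_inM u n w : inM_under u n w ->
  forall h, admissible n 0 h -> inM u (renM h w).
Proof.
  induction 1 as [n|n a w _ IH|n w _ IH]; intros h Hh; simpl.
  - rewrite renM_renM.
    replace (fun k => h (n + k)) with (fun k : nat => k)
      by (extensionality k; symmetry; exact (Hh k)).
    rewrite renM_id. constructor.
  - constructor. auto.
  - (* Bind the body's index 0 under a name [c] fresh for its other names. *)
    destruct (mu_names_bounded w) as [B HB].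
    set (c := S (list_max (map h (seq 0 B)))).
    assert (Hc : forall j, j < B -> h j <> c).
    { intros j Hj. assert (Hle : h j <= list_max (map h (seq 0 B))).
      { apply (proj1 (Forall_forall _ _) (proj1 (list_max_le _ _) (le_n _))).
        apply in_map, in_seq. lia. }
      unfold c. lia. }
    pose proof (inM_mu u c _ (IH (scons c h) Hh)) as Hin.
    unfold mu_bind in Hin. rewrite renM_renM in Hin.
    erewrite renM_ext_below in Hin; eauto.
    intros [|j] Hj; simpl.
    + rewrite Nat.eqb_refl; auto.
    + destruct (Nat.eqb_spec (h j) c) as [E|_]; auto.
      exfalso. apply (Hc j); [lia|exact E].
Qed.

Theorem mainTheorem8 :
  forall (e : term) (X : nat),
    typed nil nil e (TArr TBot (TVar X)) ->
    forall (u : term) (vs : list term),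
      exists w, inM u w /\ reds (apps (App e u) vs) w.
Proof.
  intros e X He u vs.
  assert (R : realizes u (TArr TBot (TVar X)) 0 e).
  { rewrite <- (inst_id e Var (fun a => a) (fun _ => nil)) by auto.
    apply (adequacy u _ _ _ _ He), env_nil. }
  destruct (R 0 (fun x => x) (admissible_id 0) (u :: vs) (conj (realizes_bot_u u) I))
    as [w [Hred Hin]].
  exists w. split.
  - rewrite <- renM_id. apply (inM_under_inM u 0); [exact Hin | apply admissible_id].
  - rewrite renM_id in Hred. exact Hred.
Qed.
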